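(* For every odd integer $n\geq 3$ and every integer $m\geq 2$, the graph $mW_n$ (the disjoint union of $m$ copies of the wheel $W_n$) is $C_3$-supermagic.
   Context: All graphs are finite and simple. For a graph $H$, a graph $G=(V,E)$ has an $H$-covering if every edge of $G$ belongs to a subgraph of $G$ isomorphic to $H$. For such $G$, an $H$-magic labeling is a bijection $\lambda: V\cup E\to\{1,2,\dots,|V|+|E|\}$ for which there is a constant $c$ such that for every subgraph $H'=(V',E')$ of $G$ isomorphic to $H$, $\sum_{v\in V'}\lambda(v)+\sum_{e\in E'}\lambda(e)=c$. It is $H$-supermagic if moreover $\{\lambda(v):v\in V\}=\{1,\dots,|V|\}$; $G$ is $H$-supermagic if it admits such a labeling. $C_k$ is the cycle of length $k$. $mG$ denotes the disjoint union of $m$ copies of $G$. The wheel $W_n=K_1+C_n$ has vertices $c,v_1,\dots,v_n$ and edges $cv_i$ ($1\le i\le n$) and $v_iv_{i+1}$ ($1\le i\le n$, indices modulo $n$). *)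

From mathcomp Require Import all_boot.
Set Implicit Arguments. Unset Strict Implicit. Unset Printing Implicit Defensive.

Section Graphs.
Variables (T : finType) (e : rel T).

Definition simple_graph : Prop := symmetric e /\ irreflexive e.

Definition edges : {set {set T}} :=
  [set A : {set T} | [exists x, exists y, e x y && (A == [set x; y])]].

(* The triangles (subgraphs isomorphic to C_3): three pairwise adjacent
   vertices x, y, z, together with the edges xy, yz, zx. *)
Definition is_triangle (x y z : T) : Prop := e x y /\ e y z /\ e z x.

Definition C3_covering : Prop :=
  forall x y, e x y -> exists z, is_triangle x y z.

(* Labels on V ∪ E: inl v for vertices, inr A for edges A \in edges. *)
Definition in_VE (u : T + {set T}) : bool :=
  match u with inl _ => true | inr A => A \in edges end.

Definition C3_magic_labeling (f : T + {set T} -> nat) : Prop :=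
  {in in_VE &, injective f} /\
  (forall u, in_VE u -> 1 <= f u <= #|T| + #|edges|) /\
  (forall k, 1 <= k <= #|T| + #|edges| -> exists2 u, in_VE u & f u = k) /\
  exists c : nat, forall x y z, is_triangle x y z ->
    f (inl x) + f (inl y) + f (inl z)
    + f (inr [set x; y]) + f (inr [set y; z]) + f (inr [set z; x]) = c.

(* C_3-supermagic: additionally the vertices get labels {1,...,|V|}. *)
Definition C3_supermagic_labeling (f : T + {set T} -> nat) : Prop :=
  C3_magic_labeling f /\ forall v : T, f (inl v) <= #|T|.

Definition C3_supermagic : Prop :=
  C3_covering /\ exists f, C3_supermagic_labeling f.

End Graphs.

(* The wheel W_n on vertices option 'I_n: None is the centre c,
   Some i is the rim vertex v_(i+1); rim edges v_i v_(i+1) indices mod n. *)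
Definition wheel_adj (n : nat) (u w : option 'I_n) : bool :=
  match u, w with
  | None, None => false
  | None, Some _ | Some _, None => true
  | Some i, Some j => (j == i.+1 %% n :> nat) || (i == j.+1 %% n :> nat)
  end.

Definition mW_adj (m n : nat) : rel ('I_m * option 'I_n) :=
  fun a b => (a.1 == b.1) && wheel_adj a.2 b.2.
Arguments mW_adj : clear implicits.
Arguments wheel_adj : clear implicits.

(* For n >= 5 the only triangles are the hub triangles c v_i v_(i+1):
   rim vertex v_i of copy k gets k+1 + m i, the centre k+1 + m n, and an edge gets
   m (n+1) + (m-k) + m r, where the rank r is n + sigma(i) on spokes and tau(i) on rim
   edges for permutations sigma, tau of {0,...,n-1} making
   i + (i+1) + sigma(i) + sigma(i+1) + tau(i) constant; the copy index contributes
   3(k+1) + 3(m-k) = 3m+3 to every triangle.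
   For n = 3 the wheel is K4, with four triangles per copy.  Fixed labelings of 2K4 and 3K4
   are blown up: for m = 2t each label L of the 2K4 labeling becomes a block of t
   consecutive labels shared by t copies, the r-th copy taking the r-th entry on vertices
   and the (t-1-r)-th on edges, so that every triangle gains the same amount; for
   m = 2t+3 three more copies carry the 3K4 labeling, interleaved with these blocks. *)

From mathcomp Require Import all_boot zify.
Set Implicit Arguments. Unset Strict Implicit. Unset Printing Implicit Defensive.

Lemma onto_iota_inj (P : finType) (lab : P -> nat) :
  (forall p, 1 <= lab p <= #|P|) ->
  (forall k, 1 <= k <= #|P| -> exists p, lab p = k) ->
  injective lab.
Proof.
move=> lab_range lab_onto; apply/injectiveP.
apply: (@leq_size_uniq _ (iota 1 #|P|)); first exact: iota_uniq.
- move=> k; rewrite mem_iota add1n ltnS => /lab_onto[p <-].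
  exact: map_f (mem_enum _ _).
- by rewrite size_map size_iota -cardE.
Qed.

Lemma mul_ord_decomp m N k : 1 <= k <= m * N ->
  exists (r : 'I_m) (q : 'I_N), k = r.+1 + m * q.
Proof.
move=> /andP[k_gt0 k_le]; have m_gt0 : 0 < m by case: m k_le => //; lia.
have r_lt : k.-1 %% m < m by rewrite ltn_mod.
have q_lt : k.-1 %/ m < N by rewrite ltn_divLR //; lia.
exists (Ordinal r_lt), (Ordinal q_lt); have := divn_eq k.-1 m; rewrite /=; lia.
Qed.

(* An edge label has to be a function of the 2-set {x, y}: it is the sum of a directed
   weight [arc] over the ordered pairs of the set, i.e. arc x y + arc y x. *)
Section CodedLabeling.
Variables (T E : finType) (e : rel T) (code : E -> {set T}).
Variables (vl : T -> nat) (arc : T -> T -> nat) (el : E -> nat).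

Definition set_weight (A : {set T}) : nat := \sum_(x in A) \sum_(y in A) arc x y.

Definition set_label (u : T + {set T}) : nat :=
  match u with inl v => vl v | inr A => set_weight A end.

Definition code_label (q : T + E) : nat :=
  match q with inl v => vl v | inr p => el p end.

Hypothesis e_irr : irreflexive e.
Hypothesis arc_diag : forall x, arc x x = 0.
Hypothesis code_edges : forall p, code p \in edges e.
Hypothesis edges_code : forall A, A \in edges e -> exists p, A = code p.
Hypothesis set_weight_code : forall p, set_weight (code p) = el p.
Hypothesis code_label_range : forall q, 1 <= code_label q <= #|T| + #|E|.
Hypothesis code_label_onto :
  forall k, 1 <= k <= #|T| + #|E| -> exists q, code_label q = k.
Hypothesis vertex_label_small : forall v, vl v <= #|T|.
Hypothesis e_covering : C3_covering e.

Definition triangle_weight (x y z : T) : nat :=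
  vl x + vl y + vl z + (arc x y + arc y x) + (arc y z + arc z y) + (arc z x + arc x z).

Lemma triangle_weight_rot x y z : triangle_weight x y z = triangle_weight y z x.
Proof. by rewrite /triangle_weight; lia. Qed.

Lemma triangle_weight_flip x y z : triangle_weight x y z = triangle_weight x z y.
Proof. by rewrite /triangle_weight; lia. Qed.

Hypothesis triangle_weight_const :
  exists c, forall x y z, is_triangle e x y z -> triangle_weight x y z = c.

Lemma set_weight_pair x y : x != y -> set_weight [set x; y] = arc x y + arc y x.
Proof.
move=> neq_xy; rewrite /set_weight big_setU1 ?big_set1 ?inE //=.
by rewrite !big_setU1 ?big_set1 ?inE // 1?eq_sym // !arc_diag /= addn0.
Qed.

Let lift_code (q : T + E) : T + {set T} :=
  match q with inl v => inl v | inr p => inr (code p) end.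

Lemma code_label_inj : injective code_label.
Proof. by apply: onto_iota_inj; rewrite card_sum. Qed.

Lemma code_inj : injective code.
Proof.
move=> p1 p2 eq_code.
suff: code_label (inr p1) = code_label (inr p2) by move/code_label_inj => [].
by rewrite /= -!set_weight_code eq_code.
Qed.

Lemma card_edges : #|edges e| = #|E|.
Proof.
rewrite -(card_imset _ code_inj); apply: eq_card => A.
apply/idP/imsetP => [/edges_code[p ->]|[p _ ->]]; [by exists p | exact: code_edges].
Qed.

Lemma set_label_lift q : set_label (lift_code q) = code_label q.
Proof. by case: q => //= p; apply: set_weight_code. Qed.

Lemma in_VE_lift u : in_VE e u -> exists q, u = lift_code q.
Proof.
case: u => [v|A] /=; first by exists (inl v).
by case/edges_code => p ->; exists (inr p).
Qed.

Lemma lift_in_VE q : in_VE e (lift_code q).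
Proof. by case: q => //= p; apply: code_edges. Qed.

Lemma coded_supermagic : C3_supermagic e.
Proof.
split=> //; exists set_label; split=> //; split; [|split; [|split]].
- move=> u1 u2 /in_VE_lift[q1 ->] /in_VE_lift[q2 ->].
  by rewrite !set_label_lift => /code_label_inj ->.
- by move=> u /in_VE_lift[q ->]; rewrite set_label_lift card_edges.
- move=> k; rewrite card_edges => /code_label_onto[q <-].
  by exists (lift_code q); [apply: lift_in_VE | apply: set_label_lift].
have [c triangle_c] := triangle_weight_const; exists c => x y z tri_xyz.
have [exy [eyz ezx]] := tri_xyz.
have neq a b : e a b -> a != b by apply: contraTneq => ->; rewrite e_irr.
by rewrite /= !set_weight_pair ?neq //; apply: triangle_c.
Qed.

End CodedLabeling.

Lemma nat_of_ordS n (i : 'I_n) : (ordS i : nat) = if i.+1 == n then 0 else i.+1.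
Proof.
rewrite /=; case: eqP => [-> | ne_n]; first by rewrite modnn.
by rewrite modn_small //; have := ltn_ord i; lia.
Qed.

Section WheelLabeling.
Variables (m n : nat).
Hypothesis n_gt2 : 2 < n.

Lemma ordS_neq (i : 'I_n) : ordS i != i.
Proof.
apply/eqP => /(congr1 (@nat_of_ord n)); rewrite nat_of_ordS; have := ltn_ord i.
by case: eqP; lia.
Qed.

Lemma ordS2_neq (i : 'I_n) : ordS (ordS i) != i.
Proof.
apply/eqP => /(congr1 (@nat_of_ord n)); rewrite !nat_of_ordS; have := ltn_ord i.
by case: eqP; case: eqP; lia.
Qed.

Lemma wheel_adj_rim (i j : 'I_n) :
  wheel_adj n (Some i) (Some j) = (j == ordS i) || (i == ordS j).
Proof. by []. Qed.

Lemma wheel_adj_irr : irreflexive (wheel_adj n).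
Proof. by case=> // i; rewrite wheel_adj_rim eq_sym orbb (negbTE (ordS_neq i)). Qed.

Lemma mW_adj_irr : irreflexive (mW_adj m n).
Proof. by move=> x; rewrite /mW_adj wheel_adj_irr andbF. Qed.

Lemma mW_adj_copy (k : 'I_m) (a b : option 'I_n) :
  mW_adj m n (k, a) (k, b) = wheel_adj n a b.
Proof. by rewrite /mW_adj eqxx. Qed.

Lemma mW_covering : C3_covering (mW_adj m n).
Proof.
move=> [k a] [k' b] /andP[/= /eqP <-{k'} adj_ab].
case: a b adj_ab => [i|] [j|] // adj_ab.
- by exists (k, None); rewrite /is_triangle !mW_adj_copy.
- exists (k, Some (ordS i)); rewrite /is_triangle !mW_adj_copy.
  by rewrite wheel_adj_rim eqxx orbT.
- by exists (k, Some (ordS j)); rewrite /is_triangle !mW_adj_copy wheel_adj_rim eqxx.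
Qed.

Lemma mW_triangle x y z : is_triangle (mW_adj m n) x y z ->
  [/\ y.1 = x.1, z.1 = x.1 & is_triangle (wheel_adj n) x.2 y.2 z.2].
Proof.
by case=> /andP[/eqP-> adj_xy] [/andP[/eqP-> adj_yz] /andP[/eqP-> adj_zx]].
Qed.

Variables (vl : 'I_m -> option 'I_n -> nat) (sp rm : 'I_m -> 'I_n -> nat).

Definition mW_vertex_label (x : 'I_m * option 'I_n) : nat := vl x.1 x.2.

Definition mW_arc (x y : 'I_m * option 'I_n) : nat :=
  match x.2, y.2 with
  | None, Some i => sp x.1 i
  | Some i, Some j => if j == ordS i then rm x.1 i else 0
  | _, _ => 0
  end.

Definition mW_edge (p : 'I_m * ('I_n + 'I_n)) : {set 'I_m * option 'I_n} :=
  match p.2 with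
  | inl i => [set (p.1, None); (p.1, Some i)]
  | inr i => [set (p.1, Some i); (p.1, Some (ordS i))]
  end.

Definition mW_edge_label (p : 'I_m * ('I_n + 'I_n)) : nat :=
  match p.2 with inl i => sp p.1 i | inr i => rm p.1 i end.

Definition mW_label := code_label mW_vertex_label mW_edge_label.

Lemma mW_arc_diag x : mW_arc x x = 0.
Proof. by case: x => k [i|] //; rewrite /mW_arc /= eq_sym (negbTE (ordS_neq i)). Qed.

Lemma mW_edge_edges p : mW_edge p \in edges (mW_adj m n).
Proof.
rewrite inE; case: p => k [i|i]; apply/existsP.
  by exists (k, None); apply/existsP; exists (k, Some i); rewrite mW_adj_copy eqxx.
exists (k, Some i); apply/existsP; exists (k, Some (ordS i)).
by rewrite mW_adj_copy wheel_adj_rim !eqxx.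
Qed.

Lemma edges_mW_edge A : A \in edges (mW_adj m n) -> exists p, A = mW_edge p.
Proof.
rewrite inE => /existsP[[k a] /existsP[[k' b] /andP[/andP[/= /eqP<- adj_ab] /eqP->]]].
case: a b adj_ab => [i|] [j|] // adj_ab.
- move: adj_ab; rewrite -/(wheel_adj n (Some i) (Some j)) wheel_adj_rim.
  case/orP => /eqP->; first by exists (k, inr i).
  by exists (k, inr j); rewrite setUC.
- by exists (k, inl i); rewrite setUC.
- by exists (k, inl j).
Qed.

Lemma set_weight_mW_edge p : set_weight mW_arc (mW_edge p) = mW_edge_label p.
Proof.
case: p => k [i|i]; rewrite /= (set_weight_pair mW_arc_diag) ?xpair_eqE ?eqxx //=.
- by rewrite /mW_arc /= addn0.
- by rewrite /mW_arc /= eqxx ifN ?addn0 // eq_sym ordS2_neq.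
- by rewrite eq_sym ordS_neq.
Qed.

Variable c : nat.
Hypothesis mW_label_range : forall q, 1 <= mW_label q <= m * (3 * n).+1.
Hypothesis mW_label_onto : forall k, 1 <= k <= m * (3 * n).+1 -> exists q, mW_label q = k.
Hypothesis vertex_label_small : forall k a, vl k a <= m * n.+1.
Hypothesis hub_triangle_weight : forall k i,
  vl k None + vl k (Some i) + vl k (Some (ordS i)) + sp k i + sp k (ordS i) + rm k i = c.
Hypothesis rim_triangle_weight : forall k i j l,
  is_triangle (wheel_adj n) (Some i) (Some j) (Some l) ->
  triangle_weight mW_vertex_label mW_arc (k, Some i) (k, Some j) (k, Some l) = c.

Lemma mW_hub_triangle_weight k i j : wheel_adj n (Some i) (Some j) ->
  triangle_weight mW_vertex_label mW_arc (k, None) (k, Some i) (k, Some j) = c.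
Proof.
have hub_weight l : triangle_weight mW_vertex_label mW_arc
    (k, None) (k, Some l) (k, Some (ordS l)) = c.
  rewrite -(hub_triangle_weight k l) /triangle_weight /mW_vertex_label /mW_arc /=.
  by rewrite eqxx ifN 1?eq_sym ?ordS2_neq //; lia.
by rewrite wheel_adj_rim => /orP[] /eqP->; last rewrite triangle_weight_flip.
Qed.

Lemma mW_triangle_weight x y z : is_triangle (mW_adj m n) x y z ->
  triangle_weight mW_vertex_label mW_arc x y z = c.
Proof.
case: x y z => [k a] [k1 b] [k2 d] /mW_triangle[/= -> -> [adj_ab [adj_bd adj_da]]].
case: a b d adj_ab adj_bd adj_da => [i|] [j|] [l|] // adj_ab adj_bd adj_da.
- exact: rim_triangle_weight.
- by rewrite -triangle_weight_rot; apply: mW_hub_triangle_weight.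
- by rewrite triangle_weight_rot; apply: mW_hub_triangle_weight.
- exact: mW_hub_triangle_weight.
Qed.

Lemma mW_supermagic_of_labels : C3_supermagic (mW_adj m n).
Proof.
have card_vertices : #|{: 'I_m * option 'I_n}| = m * n.+1.
  by rewrite card_prod card_option !card_ord.
have card_codes : #|{: 'I_m * ('I_n + 'I_n)}| = m * (n + n).
  by rewrite card_prod card_sum !card_ord.
have card_total : #|{: 'I_m * option 'I_n}| + #|{: 'I_m * ('I_n + 'I_n)}| = m * (3 * n).+1.
  by rewrite card_vertices card_codes; lia.
apply: (coded_supermagic (code := mW_edge) (vl := mW_vertex_label) (arc := mW_arc)
         (el := mW_edge_label)).
- exact: mW_adj_irr.
- exact: mW_arc_diag.
- exact: mW_edge_edges.
- exact: edges_mW_edge.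
- exact: set_weight_mW_edge.
- by rewrite card_total.
- by rewrite card_total.
- by move=> [k a]; rewrite card_prod card_option !card_ord; apply: vertex_label_small.
- exact: mW_covering.
- by exists c; apply: mW_triangle_weight.
Qed.

End WheelLabeling.


Definition spoke_rank n i := if odd i then n - (i.+1)./2 else n./2 - i./2.
Definition rim_rank n i := if i.+2 <= n then n - i.+2 else n - 1.

Lemma spoke_rank_lt n i : i < n -> spoke_rank n i < n.
Proof. rewrite /spoke_rank; case: ifP; lia. Qed.

Lemma rim_rank_lt n i : 0 < n -> rim_rank n i < n.
Proof. rewrite /rim_rank; case: ifP; lia. Qed.

Lemma spoke_rank_onto n q : odd n -> q < n -> exists2 i, i < n & spoke_rank n i = q.
Proof.
move=> odd_n q_lt; rewrite /spoke_rank.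
have [q_small | q_large] := leqP q n./2.
  by exists (n./2 - q).*2; [lia | rewrite odd_double; lia].
by exists (n - q).*2.-1; [lia | case: ifP; lia].
Qed.

Lemma rim_rankK n i : i < n -> rim_rank n (rim_rank n i) = i.
Proof. rewrite /rim_rank; case: ifP; case: ifP; lia. Qed.

Lemma hub_rank_sum n (i : 'I_n) : odd n -> 2 < n ->
  i + ordS i + spoke_rank n i + spoke_rank n (ordS i) + rim_rank n i = 5 * n./2.
Proof.
move=> odd_n n_gt2; rewrite nat_of_ordS /spoke_rank /rim_rank; have := ltn_ord i.
by case: eqP => ?; repeat case: ifP => ?; rewrite /=; lia.
Qed.

Section HubLabeling.
Variables (m n : nat).
Hypotheses (odd_n : odd n) (n_gt3 : 3 < n) (m_gt0 : 0 < m).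

Definition hub_pos (a : option 'I_n) : nat := if a is Some i then i else n.

Definition hub_vertex_label (k : 'I_m) (a : option 'I_n) : nat := k.+1 + m * hub_pos a.
Definition hub_edge_label (k : 'I_m) (r : nat) : nat := m * n.+1 + (m - k) + m * r.
Definition hub_spoke_label k (i : 'I_n) := hub_edge_label k (n + spoke_rank n i).
Definition hub_rim_label k (i : 'I_n) := hub_edge_label k (rim_rank n i).

Let hub_label := mW_label hub_vertex_label hub_spoke_label hub_rim_label.

Lemma hub_pos_le a : hub_pos a <= n.
Proof. by case: a => [i|] //=; apply: ltnW. Qed.

Lemma hub_label_range q : 1 <= hub_label q <= m * (3 * n).+1.
Proof.
case: q => [[k a]|[k [i|i]]];
  rewrite /hub_label /mW_label /= /mW_vertex_label /mW_edge_label /=; have := ltn_ord k.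
- have := leq_mul (leqnn m) (hub_pos_le a); rewrite /hub_vertex_label; nia.
- have := spoke_rank_lt (ltn_ord i); rewrite /hub_spoke_label /hub_edge_label; nia.
- have := @rim_rank_lt n i (ltnW (ltnW (ltnW n_gt3))).
  rewrite /hub_rim_label /hub_edge_label; nia.
Qed.

Lemma hub_label_onto k : 1 <= k <= m * (3 * n).+1 -> exists q, hub_label q = k.
Proof.
move=> k_range; rewrite /hub_label /mW_label.
have [k_vertex | k_edge] := leqP k (m * n.+1).
  have [r [q ->]] := @mul_ord_decomp m n.+1 k (ltac:(lia)).
  have [q_lt | q_eq] := ltnP q n.
    by exists (inl (r, Some (Ordinal q_lt))).
  have -> : (q : nat) = n by have := ltn_ord q; lia.
  by exists (inl (r, None)).
have [r [q k_eq]] := @mul_ord_decomp m (n + n) (k - m * n.+1) (ltac:(lia)).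
have copy_lt : m - r.+1 < m by lia.
have r_lt := ltn_ord r; have q_lt2n := ltn_ord q.
have [q_lt | q_ge] := ltnP q n.
  have rim_lt : rim_rank n q < n by apply: rim_rank_lt; lia.
  exists (inr (Ordinal copy_lt, inr (Ordinal rim_lt))).
  by rewrite /= /mW_edge_label /hub_rim_label /hub_edge_label /= rim_rankK //; lia.
have [i i_lt spoke_i] := @spoke_rank_onto n (q - n) odd_n (ltac:(lia)).
exists (inr (Ordinal copy_lt, inl (Ordinal i_lt))).
by rewrite /= /mW_edge_label /hub_spoke_label /hub_edge_label /= spoke_i subnKC //; lia.
Qed.

Lemma hub_vertex_label_small k a : hub_vertex_label k a <= m * n.+1.
Proof.
have := leq_mul (leqnn m) (hub_pos_le a); have := ltn_ord k.
rewrite /hub_vertex_label; nia.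
Qed.

Lemma hub_triangle_weight k (i : 'I_n) :
  hub_vertex_label k None + hub_vertex_label k (Some i) + hub_vertex_label k (Some (ordS i))
  + hub_spoke_label k i + hub_spoke_label k (ordS i) + hub_rim_label k i
  = 3 * m.+1 + 3 * (m * n.+1) + m * (3 * n + 5 * n./2).
Proof.
have := hub_rank_sum i odd_n (ltnW n_gt3); have := ltn_ord k.
rewrite /hub_vertex_label /hub_spoke_label /hub_rim_label /hub_edge_label /=; nia.
Qed.

Lemma no_rim_triangle (i j l : 'I_n) :
  ~ is_triangle (wheel_adj n) (Some i) (Some j) (Some l).
Proof.
have succ_mod (x : 'I_n) := nat_of_ordS x; rewrite /= in succ_mod.
rewrite /is_triangle !wheel_adj_rim -!val_eqE /= !succ_mod.
have := ltn_ord i; have := ltn_ord j; have := ltn_ord l.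
by do !case: eqP; lia.
Qed.

Lemma hub_mW_supermagic : C3_supermagic (mW_adj m n).
Proof.
apply: (@mW_supermagic_of_labels m n _ _ _ _
  (3 * m.+1 + 3 * (m * n.+1) + m * (3 * n + 5 * n./2))).
- exact: ltnW.
- exact: hub_label_range.
- exact: hub_label_onto.
- exact: hub_vertex_label_small.
- exact: hub_triangle_weight.
- by move=> k i j l /no_rim_triangle.
Qed.

End HubLabeling.

(* C3-supermagic labelings of 2K4 and 3K4 (triangle weights 57 and 84), one row per copy;
   the items of a copy are the centre, the rim vertices v0 v1 v2, the spokes to v0 v1 v2
   and the rim edges v0v1 v1v2 v2v0, in this order. *)
Definition k4_pair_table (b : bool) : seq nat :=
  if b then [:: 2; 3; 5; 8; 15; 12; 19; 20; 11; 10]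
  else [:: 1; 4; 6; 7; 13; 16; 18; 17; 9; 14].

Definition k4_triple_table (s : nat) : seq nat :=
  match s with
  | 0 => [:: 1; 2; 6; 11; 20; 30; 23; 25; 13; 27]
  | 1 => [:: 3; 4; 7; 12; 28; 24; 16; 18; 22; 21]
  | _ => [:: 5; 8; 9; 10; 29; 19; 15; 14; 26; 17]
  end.

Definition k4_magic (f : nat -> nat) (c : nat) : Prop :=
  [/\ f 0 + f 1 + f 2 + f 4 + f 5 + f 7 = c, f 0 + f 2 + f 3 + f 5 + f 6 + f 8 = c,
      f 0 + f 3 + f 1 + f 6 + f 4 + f 9 = c & f 1 + f 2 + f 3 + f 7 + f 8 + f 9 = c].

Lemma k4_pair_table_range b id : id < 10 ->
  1 <= nth 0 (k4_pair_table b) id <= 20 /\ (id < 4 -> nth 0 (k4_pair_table b) id <= 8).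
Proof. by case: b; do 10 case: id => [|id] //. Qed.

Lemma k4_triple_table_range s id : s < 3 -> id < 10 ->
  1 <= nth 0 (k4_triple_table s) id <= 30 /\ (id < 4 -> nth 0 (k4_triple_table s) id <= 12).
Proof. by case: s => [|[|[|]]] //; do 10 case: id => [|id] //. Qed.

Lemma tables_onto (I : eqType) (table : I -> seq nat) (rows : seq I) N :
  all (fun L => has (fun p => nth 0 (table p.1) p.2 == L)
    [seq (x, id) | x <- rows, id <- iota 0 10]) (iota 1 N) ->
  forall L, 1 <= L <= N -> exists x id, [/\ x \in rows, id < 10 & nth 0 (table x) id = L].
Proof.
move=> /allP table_onto L L_range; have /table_onto : L \in iota 1 N by rewrite mem_iota; lia.
case/hasP => _ /allpairsP[[x id] [x_row /[!mem_iota] /= id_range ->]] /eqP table_L.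
by exists x, id; split => //; lia.
Qed.

Lemma k4_pair_table_onto L : 1 <= L <= 20 ->
  exists b id, id < 10 /\ nth 0 (k4_pair_table b) id = L.
Proof.
by move=> /(@tables_onto _ k4_pair_table [:: false; true]) [//|b [id [_]]]; exists b, id.
Qed.

Lemma k4_triple_table_onto S : 1 <= S <= 30 ->
  exists s id, [/\ s < 3, id < 10 & nth 0 (k4_triple_table s) id = S].
Proof.
move=> /(@tables_onto _ k4_triple_table [:: 0; 1; 2]) [//|s [id [s_row]]].
by exists s, id; split => //; move: s_row; rewrite !inE; lia.
Qed.

Definition k4_pairs (m : nat) : nat := m./2 - odd m.

Definition pair_label (t o L r : nat) : nat := t * L.-1 + o * (L + L.-1./2) + r + 1.

Definition triple_label (t S : nat) : nat := t * (S.-1 - S.-1 %/ 3) + S.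

Definition k4_label (m j id : nat) : nat :=
  let t := k4_pairs m in
  if j < t.*2 then
    pair_label t (odd m) (nth 0 (k4_pair_table (odd j)) id)
      (if id < 4 then j./2 else t - (j./2).+1)
  else triple_label t (nth 0 (k4_triple_table (j - t.*2)) id).

Lemma k4_pairsE m : 1 < m -> m = (k4_pairs m).*2 + 3 * odd m.
Proof. by rewrite /k4_pairs; lia. Qed.

Lemma k4_label_pair m r (b : bool) id : r < k4_pairs m ->
  k4_label m (r.*2 + b) id = pair_label (k4_pairs m) (odd m)
    (nth 0 (k4_pair_table b) id) (if id < 4 then r else k4_pairs m - r.+1).
Proof.
move=> r_lt; rewrite /k4_label ifT; last by case: b; lia.
by rewrite oddD odd_double oddb /= [r.*2 + b]addnC half_bit_double.
Qed.

Lemma k4_label_triple m s id : k4_label m ((k4_pairs m).*2 + s) id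
  = triple_label (k4_pairs m) (nth 0 (k4_triple_table s) id).
Proof. by rewrite /k4_label ifN ?addKn //; lia. Qed.

Lemma k4_label_cases m j : 1 < m -> j < m ->
  (exists r (b : bool), r < k4_pairs m /\ j = r.*2 + b) \/
  (exists2 s, s < 3 & j = (k4_pairs m).*2 + s).
Proof.
move=> m_gt1 j_lt; have m_eq := k4_pairsE m_gt1.
have [j_pair | j_triple] := ltnP j (k4_pairs m).*2.
  by left; exists j./2, (odd j); split; [lia | rewrite -{1}(odd_double_half j) addnC].
by right; exists (j - (k4_pairs m).*2); lia.
Qed.

Lemma k4_label_magic m j : 1 < m -> j < m -> k4_magic (k4_label m j) (27 * m + 3).
Proof.
move=> m_gt1 j_lt; have m_eq := k4_pairsE m_gt1.
have [[r [b [r_lt j_eq]]] | [s s_lt j_eq]] := k4_label_cases m_gt1 j_lt; subst j.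
  rewrite /k4_magic !k4_label_pair // /pair_label.
  by case: b {j_lt} => /=; split; lia.
rewrite /k4_magic !k4_label_triple /triple_label.
have odd_m : odd m by move: m_eq j_lt; case: (odd m); lia.
by case: s s_lt {j_lt} => [|[|[|]]] //= _; rewrite /divn /edivn /=; split; lia.
Qed.

Lemma k4_label_range m j id : 1 < m -> j < m -> id < 10 ->
  1 <= k4_label m j id <= 10 * m /\ (id < 4 -> k4_label m j id <= 4 * m).
Proof.
move=> m_gt1 j_lt id_lt; have m_eq := k4_pairsE m_gt1.
have [[r [b [r_lt j_eq]]] | [s s_lt j_eq]] := k4_label_cases m_gt1 j_lt; subst j.
- rewrite k4_label_pair // /pair_label; set t := k4_pairs m in m_eq r_lt *.
  have [L_range L_vertex] := k4_pair_table_range b id_lt.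
  set L := nth 0 _ id in L_range L_vertex *.
  have tL_le u : L <= u.+1 -> t * L.-1 <= t * u by move=> L_le; apply: leq_mul; lia.
  have tL_19 := tL_le 19 (ltac:(lia)).
  have tL_7 : id < 4 -> t * L.-1 <= t * 7 by move/L_vertex/tL_le.
  move: (t * L.-1) tL_19 tL_7 => tL tL_19 tL_7.
  by move: m_eq; case: (odd m) => /= m_eq; split; case: ifP; lia.
- have odd_m : odd m by move: m_eq j_lt; case: (odd m); lia.
  rewrite k4_label_triple /triple_label; set t := k4_pairs m in m_eq *.
  have [S_range S_vertex] := k4_triple_table_range s_lt id_lt.
  set S := nth 0 _ id in S_range S_vertex *.
  have tS_20 : t * (S.-1 - S.-1 %/ 3) <= t * 20 by apply: leq_mul; lia.
  have tS_8 : id < 4 -> t * (S.-1 - S.-1 %/ 3) <= t * 8.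
    by move/S_vertex => S_le; apply: leq_mul; lia.
  move: (t * (S.-1 - S.-1 %/ 3)) tS_20 tS_8 => tS tS_20 tS_8.
  by split; lia.
Qed.

Lemma k4_pair_hit m L r : 1 < m -> 1 <= L <= 20 -> r < k4_pairs m ->
  exists j id, [/\ j < m, id < 10 & k4_label m j id = pair_label (k4_pairs m) (odd m) L r].
Proof.
move=> m_gt1 L_range r_lt; have m_eq := k4_pairsE m_gt1.
have [b [id [id_lt table_L]]] := k4_pair_table_onto L_range.
have r'_lt : (if id < 4 then r else k4_pairs m - r.+1) < k4_pairs m by case: ifP; lia.
exists ((if id < 4 then r else k4_pairs m - r.+1).*2 + b), id; split => //.
  by case: b {table_L}; lia.
rewrite k4_label_pair // table_L; have [// | id_ge4] := ltnP id 4.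
by congr (pair_label _ _ _ _); lia.
Qed.

Lemma k4_triple_hit m S : 1 < m -> odd m -> 1 <= S <= 30 ->
  exists j id, [/\ j < m, id < 10 & k4_label m j id = triple_label (k4_pairs m) S].
Proof.
move=> m_gt1 odd_m S_range; have m_eq := k4_pairsE m_gt1.
have [s [id [s_lt id_lt table_S]]] := k4_triple_table_onto S_range.
by exists ((k4_pairs m).*2 + s), id; rewrite k4_label_triple table_S; split => //; lia.
Qed.

(* For m = 2t+3 the labels form ten blocks of m consecutive numbers; in each block the
   3K4 labels sit at offsets 0, t+1 and 2t+2, and two runs of t 2K4 labels fill the gaps. *)
Lemma odd_block_cases t w : w < t.*2 + 3 ->
  (exists2 c, c < 3 & w = c * t.+1) \/
  (exists e pos, [/\ e < 2, pos < t & w = e * t.+1 + pos.+1]).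
Proof.
move=> w_lt; have [w_le | w_gt] := leqP w t.+1.
  have [-> | w_pos] := posnP w; first by left; exists 0.
  have [-> | w_ne] := eqVneq w t.+1; first by left; exists 1; lia.
  by right; exists 0, w.-1; split; lia.
have [-> | w_ne] := eqVneq w (t.*2 + 2); first by left; exists 2; lia.
by right; exists 1, (w - t.+2); split; lia.
Qed.

Lemma k4_label_onto m k : 1 < m -> 1 <= k <= 10 * m ->
  exists j id, [/\ j < m, id < 10 & k4_label m j id = k].
Proof.
move=> m_gt1 k_range; have m_eq := k4_pairsE m_gt1.
case: (boolP (odd m)) => [odd_m | even_m].
  have [w [g ->]] := @mul_ord_decomp m 10 k (ltac:(lia)).
  have g_lt := ltn_ord g; have w_lt := ltn_ord w.
  move: m_eq; rewrite odd_m => m_eq.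
  case: (@odd_block_cases (k4_pairs m) w (ltac:(lia))) =>
    [[c c_lt w_eq] | [e [pos [e_lt pos_lt w_eq]]]].
    have [j [id [j_lt id_lt label_eq]]] :=
      @k4_triple_hit m (3 * g + c.+1) m_gt1 odd_m (ltac:(lia)).
    exists j, id; split => //; rewrite label_eq /triple_label.
    have -> : (3 * g + c.+1).-1 - (3 * g + c.+1).-1 %/ 3 = g.*2 + c by lia.
    by rewrite {}w_eq; move: (k4_pairs m) m_eq => t ->; nia.
  have [j [id [j_lt id_lt label_eq]]] :=
    @k4_pair_hit m (g.*2 + e.+1) pos m_gt1 (ltac:(lia)) pos_lt.
  exists j, id; split => //; rewrite label_eq /pair_label odd_m.
  have -> : (g.*2 + e.+1).-1./2 = g by lia.
  by rewrite {}w_eq; move: (k4_pairs m) m_eq => t ->; nia.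
move: m_eq; rewrite (negbTE even_m) => m_eq.
have [w [q ->]] := @mul_ord_decomp (k4_pairs m) 20 k (ltac:(lia)).
have [j [id [j_lt id_lt label_eq]]] :=
  @k4_pair_hit m q.+1 w m_gt1 (ltac:(have := ltn_ord q; lia)) (ltn_ord w).
by exists j, id; split => //; rewrite label_eq /pair_label (negbTE even_m); lia.
Qed.

Section K4Labeling.
Variable m : nat.
Hypothesis m_gt1 : 1 < m.

Definition k4_vertex_label (k : 'I_m) (a : option 'I_3) : nat :=
  k4_label m k (if a is Some i then i.+1 else 0).
Definition k4_spoke_label (k : 'I_m) (i : 'I_3) : nat := k4_label m k i.+4.
Definition k4_rim_label (k : 'I_m) (i : 'I_3) : nat := k4_label m k i.+4.+3.

Let k4_wheel_label := mW_label k4_vertex_label k4_spoke_label k4_rim_label.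

Lemma k4_wheel_label_range q : 1 <= k4_wheel_label q <= m * 10.
Proof.
have range (k : 'I_m) id : id < 10 -> 1 <= k4_label m (nat_of_ord k) id <= m * 10.
  by move=> id_lt; have [] := k4_label_range m_gt1 (ltn_ord k) id_lt; lia.
by case: q => [[k [i|]] | [k [i|i]]]; apply: range => //; have := ltn_ord i; lia.
Qed.

Lemma k4_wheel_label_onto k : 1 <= k <= m * 10 -> exists q, k4_wheel_label q = k.
Proof.
move=> k_range; have [j [id [j_lt id_lt <-]]] := @k4_label_onto m k m_gt1 (ltac:(lia)).
pose c := Ordinal j_lt.
have [id_lt4 | id_ge4] := ltnP id 4.
  have [-> | id_pos] := posnP id; first by exists (inl (c, None)).
  have i_lt : id.-1 < 3 by lia.
  by exists (inl (c, Some (Ordinal i_lt))); apply: (congr1 (k4_label m j)) => /=; lia.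
have [id_lt7 | id_ge7] := ltnP id 7.
  have i_lt : id - 4 < 3 by lia.
  by exists (inr (c, inl (Ordinal i_lt))); apply: (congr1 (k4_label m j)) => /=; lia.
have i_lt : id - 7 < 3 by lia.
by exists (inr (c, inr (Ordinal i_lt))); apply: (congr1 (k4_label m j)) => /=; lia.
Qed.

Lemma k4_vertex_label_small k a : k4_vertex_label k a <= m * 4.
Proof.
have id_lt4 : (if a is Some i then (i : nat).+1 else 0) < 4.
  by case: a => // i; have := ltn_ord i.
have [_ /(_ id_lt4)] := k4_label_range m_gt1 (ltn_ord k) (leq_trans id_lt4 (isT : 4 <= 10)).
by rewrite /k4_vertex_label; lia.
Qed.

Lemma k4_hub_triangle_weight k (i : 'I_3) :
  k4_vertex_label k None + k4_vertex_label k (Some i) + k4_vertex_label k (Some (ordS i))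
  + k4_spoke_label k i + k4_spoke_label k (ordS i) + k4_rim_label k i = 27 * m + 3.
Proof.
have [tri0 tri1 tri2 _] := k4_label_magic m_gt1 (ltn_ord k).
by case: i => [[|[|[|]]] i_lt].
Qed.

Lemma k4_rim_triangle_weight k (i j l : 'I_3) :
  is_triangle (wheel_adj 3) (Some i) (Some j) (Some l) ->
  triangle_weight (mW_vertex_label k4_vertex_label) (mW_arc k4_spoke_label k4_rim_label)
    (k, Some i) (k, Some j) (k, Some l) = 27 * m + 3.
Proof.
have [_ _ _ tri_rim] := k4_label_magic m_gt1 (ltn_ord k).
rewrite /triangle_weight /mW_vertex_label /mW_arc /k4_vertex_label /k4_rim_label /=.
case=> + [+ +]; case: i => [[|[|[|?]]] ?] //; case: j => [[|[|[|?]]] ?] //.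
all: by case: l => [[|[|[|?]]] ?] //= *; lia.
Qed.

Lemma k4_mW_supermagic : C3_supermagic (mW_adj m 3).
Proof.
apply: (@mW_supermagic_of_labels m 3 _ _ _ _ (27 * m + 3)) => //.
- exact: k4_wheel_label_range.
- exact: k4_wheel_label_onto.
- exact: k4_vertex_label_small.
- exact: k4_hub_triangle_weight.
- exact: k4_rim_triangle_weight.
Qed.

End K4Labeling.

Theorem theorem5 (n m : nat) :
  odd n -> 3 <= n -> 2 <= m -> C3_supermagic (mW_adj m n).
Proof.
move=> odd_n n_ge3 m_ge2.
have [-> | n_ne3] := eqVneq n 3; first exact: k4_mW_supermagic.
by apply: hub_mW_supermagic => //; lia.
Qed.
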